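(* Let $G$ be an $s$ clique-uniform graph of order $n$ with respect to a clique partition $F$ with $|F|=k$, and let $P_G$ be its clique partition graph. (i) If $k<n$, then $\mathcal E(P_G)\le\mathcal E(\mathcal Q_F)+\frac{2ks}{n}-2s$. (ii) If $k>n$, then $\mathcal E(P_G)\ge\mathcal E(\mathcal Q_F)+\frac{2ks}{n}-2s$. (iii) If $k=n$, then $\mathcal E(P_G)=\mathcal E(\mathcal Q_F)$.
   Context: All graphs are finite and simple, $V(G)=\{1,\dots,n\}$. A clique partition of $G$ is a set $F=\{C_1,\dots,C_k\}$ of cliques such that every edge lies in exactly one $C_j$; $G$ is $s$ clique-uniform if $|C_j|=s$ for all $j$. $\mathcal M_F$ is the $n\times k$ $(0,1)$-matrix with $(i,j)$-entry $1$ iff $i\in C_j$, and $\mathcal Q_F=\mathcal M_F\mathcal M_F^T$. The clique-degree $t_i^F$ is the number of cliques of $F$ containing $i$. $\mathcal E(\mathcal Q_F)=\sum_{i=1}^n|\lambda_i(\mathcal Q_F)-\bar t|$ with $\bar t=\frac1n\sum_i t_i^F$. The clique partition graph $P_G$ has vertex set $\{1,\dots,k\}$ with $i\ne j$ adjacent iff $C_i\cap C_j\ne\emptyset$, and $\mathcal E(P_G)$ is the sum of absolute values of its adjacency eigenvalues. *)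

(* Eigenvalues are taken in algC (algebraically closed),
   as the roots with multiplicity of the characteristic polynomial. *)
From HB Require Import structures.
From mathcomp Require Import all_boot all_order all_algebra all_field.
Set Implicit Arguments. Unset Strict Implicit. Unset Printing Implicit Defensive.
Import Order.TTheory GRing.Theory Num.Theory.
Local Open Scope ring_scope.

Definition simple_graph (n : nat) (e : rel 'I_n) : Prop :=
  symmetric e /\ irreflexive e.

Definition is_clique (n : nat) (e : rel 'I_n) (C : {set 'I_n}) : Prop :=
  forall x y, x \in C -> y \in C -> x != y -> e x y.

(* F = {C_1,...,C_k} given by an injective enumeration C : 'I_k -> {set 'I_n}. *)
Definition clique_partition (n k : nat) (e : rel 'I_n)
  (C : 'I_k -> {set 'I_n}) : Prop :=
  injective C /\ (forall j, is_clique e (C j)) /\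
  (forall x y, e x y -> exists! j, x \in C j /\ y \in C j).

Definition clique_uniform (n k s : nat) (C : 'I_k -> {set 'I_n}) : Prop :=
  forall j, #|C j| = s.

Definition incM (n k : nat) (C : 'I_k -> {set 'I_n}) : 'M[algC]_(n, k) :=
  \matrix_(i < n, j < k) ((i \in C j)%:R).

Definition QF (n k : nat) (C : 'I_k -> {set 'I_n}) : 'M[algC]_n :=
  incM C *m (incM C)^T.

Definition clique_degree (n k : nat) (C : 'I_k -> {set 'I_n}) (i : 'I_n) : nat :=
  #|[set j | i \in C j]|.

Definition tbar (n k : nat) (C : 'I_k -> {set 'I_n}) : algC :=
  (\sum_(i < n) clique_degree C i)%:R / n%:R.

Definition PG_adj (n k : nat) (C : 'I_k -> {set 'I_n}) : 'M[algC]_k :=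
  \matrix_(i < k, j < k) ((i != j) && (C i :&: C j != set0))%:R.

Lemma char_poly_splits (m : nat) (A : 'M[algC]_m) :
  exists r : seq algC, char_poly A == \prod_(z <- r) ('X - z%:P).
Proof.
have [r Hr] := closed_field_poly_normal (char_poly A).
exists r; apply/eqP; rewrite {1}Hr (monicP (char_poly_monic A)) scale1r //.
Qed.

Definition eigs (m : nat) (A : 'M[algC]_m) : seq algC := xchoose (char_poly_splits A).

Definition energy_shift (m : nat) (A : 'M[algC]_m) (c : algC) : algC :=
  \sum_(l <- eigs A) `|l - c|.

Definition graph_energy (m : nat) (A : 'M[algC]_m) : algC := energy_shift A 0.

From HB Require Import structures.
From mathcomp Require Import all_boot all_order all_algebra all_field.
From mathcomp Require Import ring.
Set Implicit Arguments. Unset Strict Implicit. Unset Printing Implicit Defensive.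
Import Order.TTheory GRing.Theory Num.Theory.
Local Open Scope ring_scope.
Local Open Scope sesquilinear_scope.

(* With M the n x k vertex-clique incidence matrix, Q_F = M M^T, while
   M^T M = A(P_G) + s I because two distinct cliques of a partition share at
   most one vertex.  The spectra of M M^T and M^T M agree up to |n - k| zeros,
   both are nonnegative, and both traces equal ks; so the eigenvalues of M^T M
   have mean s, those of Q_F have mean t = ks/n, E(P_G) = sum |lambda - s| and
   E(Q_F) = sum |mu - t|.  Moving the centre of a sum of distances from a up to
   b costs at most b - a per term, and 2(b - a) less as soon as some term is
   at least b, which happens when b is the mean.  Applied with b the larger of
   s and t this gives (i) and (ii); for k = n the spectra agree and s = t. *)

Lemma comp_XsubC (R : comNzRingType) (a c : R) :
  ('X - a%:P) \Po ('X - c%:P) = 'X - (a + c)%:P.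
Proof. by rewrite comp_polyB comp_polyX comp_polyC polyCD opprD addrA addrAC. Qed.

Lemma char_poly_add_scalar (R : comNzRingType) m (A : 'M[R]_m) c :
  char_poly (A + c%:M) = char_poly A \Po ('X - c%:P).
Proof.
rewrite /char_poly -det_map_mx; congr (\det _); apply/matrixP => i j; rewrite !mxE.
have [->|ne] := eqVneq i j.
  by rewrite /= !mulr1n comp_XsubC.
by rewrite /= !mulr0n addr0 !sub0r raddfN /= comp_polyC.
Qed.

Lemma char_poly_mulmxC (R : comNzRingType) n k (M : 'M[R]_(n, k)) (N : 'M[R]_(k, n)) :
  'X^k * char_poly (M *m N) = 'X^n * char_poly (N *m M).
Proof.
pose Mp := map_mx polyC M; pose Np := map_mx polyC N.
pose L := block_mx ('X%:M : 'M_n) Mp Np (1%:M : 'M_k).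
have detL : \det L = char_poly (M *m N).
  have -> : L = block_mx ('X%:M - Mp *m Np) Mp 0 1%:M *m block_mx 1%:M 0 Np 1%:M.
    by rewrite mulmx_block !mulmx0 !mulmx1 !mul1mx !add0r subrK.
  rewrite (@det_mulmx {poly R}) det_ublock det_lblock !det1 !mulr1.
  by rewrite /char_poly /char_poly_mx map_mxM.
have : block_mx (1%:M : 'M_n) 0 0 ('X%:M : 'M_k) *m L =
    block_mx 1%:M 0 Np 1%:M *m block_mx ('X%:M) Mp 0 ('X%:M - Np *m Mp).
  rewrite !mulmx_block !mulmx0 !mul0mx !mulmx1 !mul1mx !add0r !addr0.
  by rewrite mul_mx_scalar mul_scalar_mx addrC subrK.
move/(congr1 determinant).
rewrite !det_mulmx det_ublock det_lblock !det_ublock !det1 !det_scalar !mul1r detL.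
by rewrite /char_poly /char_poly_mx !map_mxM.
Qed.

Lemma eigsP m (A : 'M[algC]_m) : char_poly A = \prod_(z <- eigs A) ('X - z%:P).
Proof. exact/eqP/(xchooseP (char_poly_splits A)). Qed.

Lemma size_eigs m (A : 'M[algC]_m) : size (eigs A) = m.
Proof. by have := size_char_poly A; rewrite eigsP size_prod_XsubC => -[]. Qed.

Lemma sum_eigs m (A : 'M[algC]_m) : \sum_(x <- eigs A) x = \tr A.
Proof.
case: m A => [|m] A; first by rewrite (size0nil (size_eigs A)) big_nil /mxtrace big_ord0.
have := @coefPn_prod_XsubC _ (eigs A); rewrite -eigsP size_eigs char_poly_trace //.
by move=> /(_ isT) /oppr_inj.
Qed.

Lemma eigs_add_scalar m (A : 'M[algC]_m) (c : algC) :
  perm_eq (eigs (A + c%:M)) [seq x + c | x <- eigs A].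
Proof.
apply: prod_XsubC_eq; rewrite -eigsP char_poly_add_scalar eigsP rmorph_prod big_map.
by apply: eq_bigr => x _; rewrite /= comp_XsubC.
Qed.

Lemma eigs_mulmxC n k (M : 'M[algC]_(n, k)) (N : 'M[algC]_(k, n)) :
  perm_eq (eigs (M *m N) ++ nseq k 0) (eigs (N *m M) ++ nseq n 0).
Proof.
have prod_X0 p : \prod_(z <- nseq p (0 : algC)) ('X - z%:P) = 'X^p.
  by rewrite big_nseq subr0 iter_mulr_1.
apply: prod_XsubC_eq; rewrite !big_cat /= !prod_X0 -!eigsP.
by rewrite mulrC char_poly_mulmxC mulrC.
Qed.

Lemma big_eigs_mulmxC (V : nmodType) (f : algC -> V) n k
    (M : 'M[algC]_(n, k)) (N : 'M[algC]_(k, n)) :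
  \sum_(x <- eigs (M *m N)) f x + f 0 *+ k = \sum_(x <- eigs (N *m M)) f x + f 0 *+ n.
Proof.
have := perm_big (x := 0 : V) (op := +%R) _ (eigs_mulmxC M N) (P := xpredT) (F := f).
by rewrite !big_cat /= !big_nseq !iter_addr_0.
Qed.

Lemma eigs_conjT_mulmx_ge0 n k (N : 'M[algC]_(n, k)) x :
  x \in eigs (N^t* *m N) -> 0 <= x.
Proof.
rewrite -root_prod_XsubC -eigsP -eigenvalue_root_char => /eigenvalueP [v vNN v_neq0].
have : dotmx (v *m N^t*) (v *m N^t*) = x * dotmx v v.
  by rewrite !dotmxE trmx_mul map_mxM trmxCK mulmxA -(mulmxA v) vNN -scalemxAl mxE.
move/(congr1 (fun y => y / dotmx v v)); rewrite mulfK ?dnorm_eq0 // => <-.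
by rewrite divr_ge0 ?dnorm_ge0.
Qed.

Section SumDistances.
Variable R : numDomainType.
Implicit Types (r : seq R) (a b : R).

Lemma has_ge_mean r b : {in r, forall x, x \is Num.real} -> b \is Num.real ->
  (0 < size r)%N -> \sum_(x <- r) x = b *+ size r -> exists2 x, x \in r & b <= x.
Proof.
move=> rR bR r_gt0 sum_r; apply/hasP; apply/negPn/negP => /hasPn r_lt_b.
have : \sum_(x <- r) x < \sum_(x <- r) b.
  rewrite big_seq [ltRHS]big_seq ltr_sum //; last first.
    by move=> x xr; rewrite real_ltNge ?(rR x xr) ?(r_lt_b x xr).
  by case: r {rR sum_r r_lt_b} r_gt0 => //= x r _; rewrite mem_head.
by rewrite sum_r big_const_seq count_predT iter_addr_0 ltxx.
Qed.

Lemma sum_dist_shift_le r a b x0 : x0 \in r -> a <= b -> b <= x0 ->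
  \sum_(x <- r) `|x - b| + (b - a) *+ 2 <= \sum_(x <- r) `|x - a| + (b - a) *+ size r.
Proof.
move=> x0r le_ab le_bx0; have ba_ge0 : 0 <= b - a by rewrite subr_ge0.
have dist_le x : `|x - b| <= `|x - a| + (b - a).
  by rewrite -(ger0_norm ba_ge0) [`|b - a|]distrC ler_distD.
have -> : (b - a) *+ size r = \sum_(x <- r) (b - a).
  by rewrite big_const_seq count_predT iter_addr_0.
rewrite -big_split /= !(perm_big _ (perm_to_rem x0r)) /= !big_cons addrAC.
rewrite lerD ?ler_sum // !ger0_norm ?subr_ge0 ?(le_trans le_ab) //.
by rewrite mulr2n addrA subrKA.
Qed.

Lemma sum_dist_mean_shift_le r a b :
  {in r, forall x, x \is Num.real} -> b \is Num.real ->
  (0 < size r)%N -> \sum_(x <- r) x = b *+ size r -> a <= b ->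
  \sum_(x <- r) `|x - b| + (b - a) *+ 2 <= \sum_(x <- r) `|x - a| + (b - a) *+ size r.
Proof.
move=> rR bR r_gt0 sum_r le_ab; have [x0 x0r le_bx0] := has_ge_mean rR bR r_gt0 sum_r.
exact: sum_dist_shift_le x0r le_ab le_bx0.
Qed.

End SumDistances.

Section CliquePartition.
Variables (n k s : nat) (e : rel 'I_n) (C : 'I_k -> {set 'I_n}).
Hypotheses (HF : clique_partition e C) (Hu : clique_uniform s C).

Local Notation M := (incM C).

Lemma incM_conjT : M^t* = M^T.
Proof. by apply/matrixP => i j; rewrite !mxE rmorph_nat. Qed.

Lemma gram_incM_entry i j : (M^T *m M) i j = #|C i :&: C j|%:R.
Proof.
rewrite mxE -sum1_card natr_sum [RHS]big_mkcond; apply: eq_bigr => v _.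
by rewrite !mxE -natrM mulnb !inE; case: (_ && _).
Qed.

Lemma QF_diag i : QF C i i = (clique_degree C i)%:R.
Proof.
rewrite mxE /clique_degree -sum1_card natr_sum [RHS]big_mkcond; apply: eq_bigr => j _.
by rewrite !mxE -natrM mulnb andbb inE; case: (_ \in _).
Qed.

Lemma card_clique_meet_le1 i j : i != j -> (#|C i :&: C j| <= 1)%N.
Proof.
have [_ [Ccl Cuniq]] := HF; move=> ij; rewrite leqNgt.
apply/card_gt1P => -[x [y [+ + xy]]]; rewrite !inE => /andP[xi xj] /andP[yi yj].
have [l [_ l_uniq]] := Cuniq x y (Ccl i x y xi yi xy).
by move: ij; rewrite -(l_uniq i (conj xi yi)) -(l_uniq j (conj xj yj)) eqxx.
Qed.

Lemma gram_incM_PG_adj : M^T *m M = PG_adj C + s%:R%:M.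
Proof.
apply/matrixP => i j; rewrite gram_incM_entry !mxE.
have [<-|ij] := eqVneq i; first by rewrite /= add0r mulr1n setIid Hu.
rewrite /= mulr0n addr0; have := card_clique_meet_le1 ij.
by rewrite -cards_eq0; case: #|_| => [|[|]].
Qed.

Lemma mxtrace_gram_incM : \tr (M^T *m M) = (k * s)%:R.
Proof.
rewrite /mxtrace (eq_bigr (fun=> s%:R)) => [|i _]; last by rewrite gram_incM_entry setIid Hu.
by rewrite sumr_const card_ord natrM mulr_natl.
Qed.

Lemma tbar_uniform : tbar C = (k * s)%:R / n%:R.
Proof.
rewrite /tbar -mxtrace_gram_incM -mxtrace_mulC /mxtrace natr_sum.
by congr (_ / _); apply: eq_bigr => i _; rewrite QF_diag.
Qed.

Lemma graph_energy_PG_adj :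
  graph_energy (PG_adj C) = \sum_(x <- eigs (M^T *m M)) `|x - s%:R|.
Proof.
rewrite gram_incM_PG_adj (perm_big _ (eigs_add_scalar _ _)) big_map.
by apply: eq_bigr => x _; rewrite addrK subr0.
Qed.

Lemma sum_dist_eigs_QF d :
  \sum_(y <- eigs (QF C)) `|y - d| + `|d| *+ k
  = \sum_(x <- eigs (M^T *m M)) `|x - d| + `|d| *+ n.
Proof. by have := big_eigs_mulmxC (fun x => `|x - d|) M M^T; rewrite sub0r normrN. Qed.

Lemma eigs_gram_incM_ge0 x : x \in eigs (M^T *m M) -> 0 <= x.
Proof. by rewrite -incM_conjT; apply: eigs_conjT_mulmx_ge0. Qed.

Lemma eigs_QF_ge0 y : y \in eigs (QF C) -> 0 <= y.
Proof.
have -> : QF C = (M^T)^t* *m M^T by rewrite -map_trmx incM_conjT trmxK.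
exact: eigs_conjT_mulmx_ge0.
Qed.

Lemma sum_eigs_gram_incM : \sum_(x <- eigs (M^T *m M)) x = s%:R *+ k.
Proof. by rewrite sum_eigs mxtrace_gram_incM natrM mulr_natl. Qed.

Lemma tbar_mulrn : (0 < n)%N -> tbar C *+ n = s%:R *+ k.
Proof.
move=> n_gt0; rewrite tbar_uniform -[LHS]mulr_natr divfK ?pnatr_eq0 -?lt0n //.
by rewrite natrM mulr_natl.
Qed.

Lemma sum_eigs_QF : (0 < n)%N -> \sum_(y <- eigs (QF C)) y = tbar C *+ n.
Proof. by move=> n_gt0; rewrite tbar_mulrn // -sum_eigs_gram_incM !sum_eigs mxtrace_mulC. Qed.

Local Notation EP := (graph_energy (PG_adj C)).
Local Notation EQ := (energy_shift (QF C) (tbar C)).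

Lemma graph_energy_PG_adj_le :
  (0 < k)%N -> (k < n)%N -> EP <= EQ + (tbar C - s%:R) *+ 2.
Proof.
move=> k_gt0 lt_kn; have n_gt0 := ltn_trans k_gt0 lt_kn.
have t_ge0 : 0 <= tbar C by rewrite tbar_uniform divr_ge0 ?ler0n.
have le_ts : tbar C <= s%:R.
  rewrite tbar_uniform ler_pdivrMr ?ltr0n // -natrM ler_nat mulnC.
  by rewrite leq_mul2l ltnW ?orbT.
have := @sum_dist_mean_shift_le _ (eigs (M^T *m M)) (tbar C) s%:R.
rewrite size_eigs sum_eigs_gram_incM -graph_energy_PG_adj.
move=> /(_ (fun x xr => ger0_real (eigs_gram_incM_ge0 xr)) (realn _ _) k_gt0 erefl le_ts).
have : \sum_(x <- eigs (M^T *m M)) `|x - tbar C| + (s%:R - tbar C) *+ k = EQ.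
  have := sum_dist_eigs_QF (tbar C); rewrite ger0_norm // tbar_mulrn // => E.
  by rewrite mulrnBl addrA -E addrK.
by move=> ->; rewrite -lerBrDr -mulNrn opprB.
Qed.

Lemma graph_energy_PG_adj_ge : (n < k)%N -> EQ + (tbar C - s%:R) *+ 2 <= EP.
Proof.
move=> lt_nk; have EP_ge0 : 0 <= EP by apply: sumr_ge0 => x _.
have [n0|n_gt0] := posnP n.
  (* Q_F is then empty, and tbar C = 0 because x / 0 = 0. *)
  have -> : EQ = 0.
    by rewrite /energy_shift (size0nil (etrans (size_eigs _) n0)) big_nil.
  have -> : tbar C = 0 by rewrite tbar_uniform n0 invr0 mulr0.
  by rewrite add0r sub0r mulNrn (le_trans _ EP_ge0) // oppr_le0 mulrn_wge0.
have le_st : s%:R <= tbar C.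
  rewrite tbar_uniform ler_pdivlMr ?ltr0n // -natrM ler_nat.
  by rewrite mulnC leq_mul2r ltnW ?orbT.
have := @sum_dist_mean_shift_le _ (eigs (QF C)) s%:R (tbar C).
rewrite size_eigs sum_eigs_QF //.
move=> /(_ (fun y yr => ger0_real (eigs_QF_ge0 yr)) (ger0_real (le_trans (ler0n _ _) le_st))).
move=> /(_ n_gt0 erefl le_st).
have : \sum_(y <- eigs (QF C)) `|y - s%:R| + (tbar C - s%:R) *+ n = EP.
  have := sum_dist_eigs_QF s%:R; rewrite normr_nat -graph_energy_PG_adj => E.
  by rewrite mulrnBl tbar_mulrn // addrA E addrK.
by move=> ->.
Qed.

Lemma graph_energy_PG_adj_eq : (0 < k)%N -> k = n -> EP = EQ.
Proof.
move=> k_gt0 kn; have t_s : tbar C = s%:R.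
  by rewrite tbar_uniform -kn mulnC natrM mulfK ?pnatr_eq0 -?lt0n.
have := sum_dist_eigs_QF s%:R; rewrite normr_nat -graph_energy_PG_adj => E.
apply: (addIr (s%:R *+ k)); rewrite /energy_shift t_s E.
by rewrite {1}(_ : s%:R *+ k = s%:R *+ n) ?kn.
Qed.

End CliquePartition.

Theorem mainTheorem11 (n k s : nat) (e : rel 'I_n) (C : 'I_k -> {set 'I_n})
  (He : simple_graph e) (HF : clique_partition e C) (Hu : clique_uniform s C)
  (Hk : (0 < k)%N) :
  let EP := graph_energy (PG_adj C) in
  let EQ := energy_shift (QF C) (tbar C) in
  let c := (2 * k * s)%:R / n%:R - (2 * s)%:R in
  ((k < n)%N -> EP <= EQ + c) /\
  ((n < k)%N -> EP >= EQ + c) /\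
  (k = n -> EP = EQ).
Proof.
move=> EP EQ c; have -> : c = (tbar C - s%:R) *+ 2.
  by rewrite /c (tbar_uniform Hu) -mulnA !natrM; ring.
split; first exact: graph_energy_PG_adj_le HF Hu Hk.
split; first exact: graph_energy_PG_adj_ge HF Hu.
exact: graph_energy_PG_adj_eq HF Hu Hk.
Qed.
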